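(* Let $N$ be the length of the maximal strictly decreasing sequence in $(\Lambda(n;r),\triangleright)$. Then for every $\lambda\in\Lambda(n;r)$, $B^+_k(R_\lambda)=0$ for $k>N$.
   Context: $R$ commutative ring with identity, $n,r$ positive integers. $\Lambda(n;r)$: compositions in $\mathbb{N}_0^n$ with sum $r$; $\nu\triangleright\mu$ means $\nu\ne\mu$ and $\sum_{s\le t}\nu_s\ge\sum_{s\le t}\mu_s$ for all $t$. $\Lambda(n,n;r)$: $n\times n$ nonnegative integer matrices with sum $r$. $S_R(n,r)=\mathrm{End}_{R\Sigma_r}((R^n)^{\otimes r})$ ($\Sigma_r$ permuting tensor positions) has basis $\xi_\omega=\sum_{(i,j)\in\omega}e_{i,j}$, where $e_{i,j}e_k=\delta_{jk}e_i$ on the basis $e_k$ ($k\in\{1,\dots,n\}^r$) and $(i,j)\in\omega$ means $\#\{q:i_q=s,j_q=t\}=\omega_{st}$ for all $s,t$; $\xi_\lambda=\xi_{\mathrm{diag}(\lambda)}$. $\Lambda^s(n,n;r)$: upper triangular $\omega$ with $\sum_{k\le l}(l-k)\omega_{kl}\ge s$. $S^+_R(n,r)$ = span of $\xi_\omega$, $\omega\in\Lambda^0(n,n;r)$; $J_R$ = span of $\xi_\omega$, $\omega\in\Lambda^1(n,n;r)$; $L_{n,r}=\bigoplus_{\lambda\in\Lambda(n;r)}R\xi_\lambda$. $R_\lambda$: the $S^+_R(n,r)$-module $R$ with $\xi_\lambda$ acting as $1$, $\xi_\mu$ ($\mu\neq\lambda$) and $J_R$ acting as $0$. For $k\ge0$,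 $B^+_k(R_\lambda)=S^+_R(n,r)\otimes J_R\otimes\cdots\otimes J_R\otimes R_\lambda$ with $k$ copies of $J_R$, all tensor products over $L_{n,r}$. *)

From HB Require Import structures.
From mathcomp Require Import all_boot all_order all_algebra.
Set Implicit Arguments. Unset Strict Implicit. Unset Printing Implicit Defensive.
Import Order.TTheory GRing.Theory.
Local Open Scope ring_scope.

Section Schur.
Variables (R : comPzRingType) (n r : nat).

Local Notation Ik := {ffun 'I_r -> 'I_n}.

Definition Comp := {l : {ffun 'I_n -> 'I_r.+1} | (\sum_s (l s : nat) == r)%N}.
Definition Mnr := {w : {ffun 'I_n * 'I_n -> 'I_r.+1} | (\sum_p (w p : nat) == r)%N}.

Definition psum (l : Comp) (t : nat) : nat := (\sum_(s : 'I_n | (s < t)%N) (val l s : nat))%N.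
Definition dom (nu mu : Comp) : bool :=
  (nu != mu) && [forall t : 'I_n, psum mu t.+1 <= psum nu t.+1]%N.

(* elements of S_R(n,r) = End_{R Sigma_r}((R^n)^{(x) r}), as matrices w.r.t.
   the basis e_i, i in I(n,r):  x (i,j) = coefficient of e_i in x(e_j) *)
Local Notation Send := {ffun Ik * Ik -> R}.
Definition mulS (x y : Send) : Send :=
  [ffun p => \sum_(q : Ik) x (p.1, q) * y (q, p.2)].

Definition sclS (k : R) (x : Send) : Send := [ffun p => k * x p].

Definition pairmem (i j : Ik) (w : 'I_n -> 'I_n -> nat) : bool :=
  [forall s : 'I_n, forall t : 'I_n,
     #|[set q : 'I_r | (i q == s) && (j q == t)]| == w s t].
Definition xiw (w : 'I_n -> 'I_n -> nat) : Send :=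
  [ffun p => if pairmem p.1 p.2 w then 1 else 0].
Definition xi (w : Mnr) : Send := xiw (fun s t => val w (s, t)).
Definition xi_comp (l : Comp) : Send := xiw (fun s t => if s == t then (val l s : nat) else 0%N).

Definition inLam (h : nat) (w : Mnr) : bool :=
  [forall s : 'I_n, forall t : 'I_n, (t < s)%N ==> (val w (s, t) == 0 :> nat)] &&
  (h <= \sum_(p : 'I_n * 'I_n | (p.1 <= p.2)%N) ((p.2 - p.1) * val w p))%N.

Definition inSplus (x : Send) : Prop :=
  exists c : Mnr -> R, x = \sum_(w : Mnr | inLam 0 w) sclS (c w) (xi w).
Definition inJ (x : Send) : Prop :=
  exists c : Mnr -> R, x = \sum_(w : Mnr | inLam 1 w) sclS (c w) (xi w).

Definition Lel (c : Comp -> R) : Send := \sum_(l : Comp) sclS (c l) (xi_comp l).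

Definition upd k (x : {ffun 'I_k.+1 -> Send}) (i : 'I_k.+1) (v : Send) :
  {ffun 'I_k.+1 -> Send} := [ffun j => if j == i then v else x j].

Definition slot k (i : 'I_k.+1) (v : Send) : Prop :=
  if i == ord0 then inSplus v else inJ v.
Definition admissible k (x : {ffun 'I_k.+1 -> Send}) : Prop :=
  forall i, slot i (x i).

(* B^+_k(R_lambda) = S^+ (x)_L J (x)_L ... (x)_L J (x)_L R_lambda (k copies of J)
   is zero, stated through the universal property of the iterated tensor
   product over L: every map that is additive in each argument and
   L-balanced between consecutive factors vanishes on all pure tensors.
   On R_lambda, the element Lel c of L acts as multiplication by c lambda. *)
Definition Bplus_zero k (lam : Comp) : Prop :=
  forall (A : zmodType) (f : {ffun 'I_k.+1 -> Send} -> R -> A),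
    (forall x i u a, admissible x -> slot i u ->
        f (upd x i (x i + u)) a = f x a + f (upd x i u) a) ->
    (forall x a b, admissible x -> f x (a + b) = f x a + f x b) ->
    (forall x (i : 'I_k) c a, admissible x ->
        f (upd (upd x (widen_ord (leqnSn k) i) (mulS (x (widen_ord (leqnSn k) i)) (Lel c)))
               (lift ord0 i) (x (lift ord0 i))) a =
        f (upd x (lift ord0 i) (mulS (Lel c) (x (lift ord0 i)))) a) ->
    (forall x c a, admissible x ->
        f (upd x ord_max (mulS (x ord_max) (Lel c))) a = f x (c lam * a)) ->
    forall x a, admissible x -> f x a = 0.

End Schur.

Definition dec_chain n r (s : seq (Comp n r)) : bool := sorted (@dom n r) s.

From HB Require Import structures.
From mathcomp Require Import all_boot all_order all_algebra zify.
Set Implicit Arguments. Unset Strict Implicit. Unset Printing Implicit Defensive.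
Import Order.TTheory GRing.Theory.

(* A basis element xi_w of J_R sends e_j to e_i only if content(i) strictly
   dominates content(j): w is upper triangular with an entry strictly above
   the diagonal.  The idempotents xi_mu of L_{n,r} cut every factor of J_R into
   blocks xi_mu J_R xi_nu, and balancedness moves the idempotent selecting the
   column content of one factor onto the rows of the next.  So a pure tensor
   y_0 (x) y_1 (x) ... (x) y_k (x) a splits into terms in which y_1, ..., y_k
   have column contents mu_1, ..., mu_k and y_(t+1) lies in
   xi_(mu_t) J_R xi_(mu_(t+1)); such a term vanishes unless
   mu_1 |> ... |> mu_k, a chain of length k > N. *)

Section Content.
Variables (n r : nat).
Local Notation Ik := {ffun 'I_r -> 'I_n}.

Lemma card_partition (P : pred 'I_r) (h : 'I_r -> 'I_n) :
  #|[set q | P q]| = (\sum_t #|[set q | P q && (h q == t)]|)%N.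
Proof.
rewrite -sum1_card (partition_big h xpredT) //=.
by apply: eq_bigr => t _; rewrite -sum1_card; apply: eq_bigl => q; rewrite !inE.
Qed.

Definition cnt (p : Ik) (s : 'I_n) : nat := #|[set q | p q == s]|.

Lemma cnt_lt p s : (cnt p s < r.+1)%N.
Proof. by rewrite ltnS; apply: leq_trans (max_card _) _; rewrite card_ord. Qed.

Lemma sum_cnt p : (\sum_s cnt p s = r)%N.
Proof. by have := card_partition xpredT p; rewrite /= cardsT card_ord. Qed.

Fact content_subproof p : (\sum_s ([ffun s => Ordinal (cnt_lt p s)] s : nat) == r)%N.
Proof. by apply/eqP; rewrite -[RHS](sum_cnt p); apply: eq_bigr => s _; rewrite ffunE. Qed.

Definition content (p : Ik) : Comp n r := exist (fun l => _) _ (content_subproof p).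

Lemma contentE p s : (val (content p) s : nat) = cnt p s.
Proof. by rewrite /= ffunE. Qed.

Lemma content_eqP p (mu : Comp n r) : reflect (forall s, cnt p s = val mu s) (content p == mu).
Proof.
apply: (iffP eqP) => [<- s | E]; first by rewrite contentE.
by apply/val_inj/ffunP => s; apply: val_inj; rewrite /= -E ffunE.
Qed.

Lemma psum_content p t : psum (content p) t = #|[set q | (p q < t)%N]|.
Proof.
rewrite /psum (card_partition _ p) big_mkcond /=; apply: eq_bigr => s _.
rewrite contentE; case: ifP => st.
  by apply: eq_card => q; rewrite !inE; case: (p q =P s) => [->|]; rewrite ?st ?andbF.
apply/esym/eqP; rewrite cards_eq0; apply/eqP/setP => q; rewrite !inE.
by case: (p q =P s) => [->|]; rewrite ?st ?andbF.
Qed.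

Lemma content_dom (i j : Ik) :
  (forall q, i q <= j q)%N -> (exists q, i q < j q)%N -> dom (content i) (content j).
Proof.
move=> le_ij [q0 lt_q0]; have subset_lt t : [set q | j q < t]%N \subset [set q | i q < t]%N.
  by apply/subsetP => q; rewrite !inE; apply: leq_ltn_trans.
apply/andP; split.
  apply/eqP => E; have := psum_content j (j q0); rewrite -E psum_content.
  have /proper_card : [set q | j q < j q0]%N \proper [set q | i q < j q0]%N.
    by apply/properP; split; last by exists q0; rewrite !inE ?ltnn.
  by move=> + E'; rewrite E' ltnn.
apply/forallP => t; rewrite !psum_content; exact: subset_leq_card.
Qed.

Lemma pairmem_row_cnt (i j : Ik) w s : pairmem i j w -> cnt i s = (\sum_t w s t)%N.
Proof.
move=> /forallP/(_ s)/forallP Hw; rewrite /cnt (card_partition _ j).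
by apply: eq_bigr => t _; rewrite -(eqP (Hw t)); apply: eq_card => q; rewrite !inE.
Qed.

Lemma pairmem_col_cnt (i j : Ik) w t : pairmem i j w -> cnt j t = (\sum_s w s t)%N.
Proof.
move=> /forallP Hw; rewrite /cnt (card_partition _ i); apply: eq_bigr => s _.
have /forallP/(_ t)/eqP <- := Hw s; apply: eq_card => q; by rewrite !inE andbC.
Qed.

Lemma pairmem_content (i j i' j' : Ik) w : pairmem i j w -> pairmem i' j' w ->
  content i = content i' /\ content j = content j'.
Proof.
move=> H H'; split; apply/eqP/content_eqP => s; rewrite contentE.
  by rewrite (pairmem_row_cnt s H) (pairmem_row_cnt s H').
by rewrite (pairmem_col_cnt s H) (pairmem_col_cnt s H').
Qed.

Lemma pairmem_supp (i j : Ik) w s t : pairmem i j w ->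
  (w s t != 0)%N = [exists q, (i q == s) && (j q == t)].
Proof.
move=> /forallP/(_ s)/forallP/(_ t)/eqP <-.
by rewrite cards_eq0; apply/set0Pn/existsP => -[q Hq]; exists q; rewrite !inE in Hq *.
Qed.

Lemma pairmem_dom (i j : Ik) (w : Mnr n r) :
  pairmem i j (fun s t => val w (s, t)) -> inLam 1 w -> dom (content i) (content j).
Proof.
move=> Hw /andP[/forallP upper height_pos]; apply: content_dom => [q|].
  rewrite leqNgt; apply/negP => lt_ji.
  have /forallP/(_ (j q)) := upper (i q); rewrite lt_ji /= => /eqP w0.
  have := pairmem_supp (i q) (j q) Hw; rewrite /= w0 eqxx => /esym/existsPn/(_ q).
  by rewrite !eqxx.
apply/existsP; apply: contraLR height_pos => /existsPn i_ge_j; rewrite -ltnNge ltnS leqn0.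
apply/eqP/big1 => p _; case: (ltnP p.1 p.2) => [lt_p|]; last first.
  by rewrite -subn_eq0 => /eqP ->.
suff -> : (val w p : nat) = 0%N by rewrite muln0.
apply/eqP/negP => /negP nz.
have := pairmem_supp p.1 p.2 Hw; rewrite /= -surjective_pairing nz.
by case/esym/existsP => q /andP[/eqP iq /eqP jq]; have := i_ge_j q; rewrite iq jq lt_p.
Qed.

End Content.

Section Restrict.
Variables (R : comPzRingType) (n r : nat).
Local Notation Ik := {ffun 'I_r -> 'I_n}.
Local Notation Send := {ffun Ik * Ik -> R}.
Local Open Scope ring_scope.

Definition restrict (y : Send) (P : Comp n r -> Comp n r -> bool) : Send :=
  [ffun p => if P (content p.1) (content p.2) then y p else 0].

Lemma restrict_restrict (y : Send) P Q :
  restrict (restrict y P) Q = restrict y (fun a b => P a b && Q a b).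
Proof. by apply/ffunP => p; rewrite !ffunE; case: (P _ _); case: (Q _ _). Qed.

Lemma eq_restrict (y : Send) P Q : P =2 Q -> restrict y P = restrict y Q.
Proof. by move=> PQ; apply/ffunP => p; rewrite !ffunE PQ. Qed.

Lemma restrict_sub (y : Send) (P Q : Comp n r -> Comp n r -> bool) :
  (forall a b, P a b -> Q a b) -> restrict (restrict y P) Q = restrict y P.
Proof.
move=> PQ; apply/ffunP => p; rewrite !ffunE.
by case Pp: (P _ _); rewrite ?(PQ _ _ Pp) ?if_same.
Qed.

Lemma sum_restrict_col (y : Send) : \sum_nu restrict y (fun _ b => b == nu) = y.
Proof.
apply/ffunP => p; rewrite sum_ffunE (bigD1 (content p.2)) //= big1 => [|nu nu_p].
  by rewrite ffunE eqxx addr0.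
by rewrite ffunE eq_sym (negbTE nu_p).
Qed.

Lemma pairmem_diag (q p : Ik) (mu : Comp n r) :
  pairmem q p (fun s t => if s == t then (val mu s : nat) else 0%N) =
  (q == p) && (content p == mu).
Proof.
apply/idP/andP => [Hqp | [/eqP <- /content_eqP mu_q]].
  have qp : q = p.
    apply/ffunP => c; apply/eqP/negPn/negP => ne.
    have := pairmem_supp (q c) (p c) Hqp; rewrite (negbTE ne) eqxx.
    by move=> /esym/existsPn/(_ c); rewrite !eqxx.
  subst q; split => //; apply/content_eqP => s.
  rewrite (pairmem_row_cnt s Hqp) (bigD1 s) //= eqxx big1 ?addn0 // => t.
  by rewrite eq_sym => /negbTE ->.
apply/forallP => s; apply/forallP => t; case: (s =P t) => [<- | ne].
  by rewrite -mu_q /cnt; apply/eqP/eq_card => c; rewrite !inE andbb.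
rewrite cards_eq0; apply/eqP/setP => c; rewrite !inE.
by apply/negP => /andP[/eqP -> /eqP]; exact: ne.
Qed.

Lemma xi_compE (mu : Comp n r) (q p : Ik) :
  xi_comp R mu (q, p) = ((q == p) && (content p == mu))%:R.
Proof. by rewrite /xi_comp /xiw ffunE /= pairmem_diag; case: (_ && _). Qed.

Lemma mulS_xi_compr (y : Send) nu : mulS y (xi_comp R nu) = restrict y (fun _ b => b == nu).
Proof.
apply/ffunP => p; rewrite !ffunE (bigD1 p.2) //= big1 => [|q /negbTE q_p].
  by rewrite xi_compE eqxx addr0 -surjective_pairing; case: (_ == _); rewrite ?mulr1 ?mulr0.
by rewrite xi_compE q_p mulr0.
Qed.

Lemma mulS_xi_compl (y : Send) mu : mulS (xi_comp R mu) y = restrict y (fun a _ => a == mu).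
Proof.
apply/ffunP => p; rewrite !ffunE (bigD1 p.1) //= big1 => [|q q_p].
  by rewrite xi_compE eqxx addr0 -surjective_pairing; case: (_ == _); rewrite ?mul1r ?mul0r.
by rewrite xi_compE eq_sym (negbTE q_p) mul0r.
Qed.

Lemma Lel_indicator (mu : Comp n r) : Lel (fun l => (l == mu)%:R) = xi_comp R mu.
Proof.
apply/ffunP => p; rewrite sum_ffunE (bigD1 mu) //= big1 => [|l /negbTE ->].
  by rewrite ffunE eqxx mul1r addr0.
by rewrite ffunE mul0r.
Qed.

Lemma inJ0 : inJ (0 : Send).
Proof.
exists (fun _ => 0); apply/ffunP => p; rewrite sum_ffunE ffunE big1 // => w _.
by rewrite ffunE mul0r.
Qed.

Lemma inJD (y z : Send) : inJ y -> inJ z -> inJ (y + z).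
Proof.
case=> c -> [d ->]; exists (fun w => c w + d w); apply/ffunP => p.
by rewrite !ffunE !sum_ffunE -big_split; apply: eq_bigr => w _; rewrite !ffunE mulrDl.
Qed.

Lemma inJ_restrict (y : Send) P : inJ y -> inJ (restrict y P).
Proof.
case=> c ->.
pose keep (w : Mnr n r) := [exists p : Ik * Ik,
  pairmem p.1 p.2 (fun s t => val w (s, t)) && P (content p.1) (content p.2)].
exists (fun w => c w * (keep w)%:R); apply/ffunP => p; rewrite !ffunE !sum_ffunE.
case: ifP => Pp.
  apply: eq_bigr => w _; rewrite /sclS /xi /xiw !ffunE.
  case: ifP => w_p; last by rewrite !mulr0.
  suff -> : keep w by rewrite !mulr1.
  by apply/existsP; exists p; rewrite w_p Pp.
apply/esym/big1 => w _; rewrite /sclS /xi /xiw !ffunE.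
case: ifP => w_p; last by rewrite !mulr0.
case: (boolP (keep w)) => [/existsP[p' /andP[w_p' Pp']] | _]; last by rewrite mulr0 mul0r.
by have [e1 e2] := pairmem_content w_p w_p'; rewrite e1 e2 Pp' in Pp.
Qed.

Lemma restrict_block_eq0 (y : Send) (mu nu : Comp n r) : inJ y -> ~~ dom mu nu ->
  restrict y (fun a b => (a == mu) && (b == nu)) = 0.
Proof.
case=> c -> not_dom; apply/ffunP => p; rewrite !ffunE.
case: ifP => // /andP[/eqP mu_p /eqP nu_p]; rewrite sum_ffunE big1 // => w Hw.
rewrite /sclS /xi /xiw !ffunE; case: ifP => w_p; last by rewrite mulr0.
by have := pairmem_dom w_p Hw; rewrite mu_p nu_p (negbTE not_dom).
Qed.

End Restrict.

Lemma sorted_rcons2 (T : Type) (e : rel T) (s : seq T) x y :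
  sorted e (rcons s x) -> e x y -> sorted e (rcons (rcons s x) y).
Proof.
case: s => [|x0 s] /=; first by move=> _ ->.
by move=> s_x x_y; rewrite rcons_path last_rcons s_x x_y.
Qed.

Section BalancedMap.
Variables (R : comPzRingType) (n r k : nat).
Local Notation Ik := {ffun 'I_r -> 'I_n}.
Local Notation Send := {ffun Ik * Ik -> R}.
Local Notation slots := {ffun 'I_k.+1 -> Send}.
Local Open Scope ring_scope.

Lemma upd_id (x : slots) i : upd x i (x i) = x.
Proof. by apply/ffunP => j; rewrite ffunE; case: eqP => // ->. Qed.

Lemma upd_upd (x : slots) i u v : upd (upd x i u) i v = upd x i v.
Proof. by apply/ffunP => j; rewrite !ffunE; case: eqP. Qed.

Lemma slot_inJ (i : 'I_k.+1) (u : Send) : i != ord0 -> slot i u = inJ u.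
Proof. by rewrite /slot => /negbTE ->. Qed.

Lemma admissible_upd (x : slots) i u : admissible x -> slot i u -> admissible (upd x i u).
Proof. by move=> Hx Hu j; rewrite ffunE; case: eqP => [->|]. Qed.

Lemma admissible_restrict (x : slots) j P :
  admissible x -> j != ord0 -> admissible (upd x j (restrict (x j) P)).
Proof.
move=> Hx j_ne0; apply: admissible_upd; rewrite // slot_inJ //.
by apply: inJ_restrict; rewrite -(slot_inJ _ j_ne0).
Qed.

Variables (A : zmodType) (f : slots -> R -> A).
Hypothesis f_additive : forall x i u a, admissible x -> slot i u ->
  f (upd x i (x i + u)) a = f x a + f (upd x i u) a.
Hypothesis f_balanced : forall x (i : 'I_k) c a, admissible x ->
  f (upd (upd x (widen_ord (leqnSn k) i) (mulS (x (widen_ord (leqnSn k) i)) (Lel c)))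
         (lift ord0 i) (x (lift ord0 i))) a =
  f (upd x (lift ord0 i) (mulS (Lel c) (x (lift ord0 i)))) a.

Lemma f_upd0 x i a : admissible x -> i != ord0 -> f (upd x i 0) a = 0.
Proof.
move=> Hx i_ne0; have J0 : slot i (0 : Send) by rewrite slot_inJ //; exact: inJ0.
have := f_additive a (admissible_upd Hx J0) J0.
rewrite !upd_upd ffunE eqxx addr0 => double.
by apply: (addrI (f (upd x i 0) a)); rewrite addr0 -double.
Qed.

Lemma f_upd_sum (I : Type) (s : seq I) (F : I -> Send) x i a :
  admissible x -> i != ord0 -> (forall l, inJ (F l)) ->
  f (upd x i (\sum_(l <- s) F l)) a = \sum_(l <- s) f (upd x i (F l)) a.
Proof.
move=> Hx i_ne0 FJ; elim: s => [|l s IH]; first by rewrite !big_nil f_upd0.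
have slotF (u : Send) : inJ u -> slot i u by rewrite slot_inJ.
have sumJ : inJ (\sum_(l <- s) F l) by apply: big_ind => //; [exact: inJ0 | exact: inJD].
have := f_additive a (admissible_upd Hx (slotF _ (FJ l))) (slotF _ sumJ).
by rewrite !upd_upd ffunE eqxx !big_cons IH.
Qed.

Lemma f_col_decomp x j a : admissible x -> j != ord0 ->
  f x a = \sum_nu f (upd x j (restrict (x j) (fun _ b => b == nu))) a.
Proof.
move=> Hx j_ne0; have xjJ : inJ (x j) by have := Hx j; rewrite slot_inJ.
rewrite -f_upd_sum // => [|nu]; last exact: inJ_restrict.
by rewrite sum_restrict_col upd_id.
Qed.

Lemma f_move_idempotent (i : 'I_k) x a mu : admissible x ->
  restrict (x (widen_ord (leqnSn k) i)) (fun _ b => b == mu) = x (widen_ord (leqnSn k) i) ->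
  f x a = f (upd x (lift ord0 i) (restrict (x (lift ord0 i)) (fun a _ => a == mu))) a.
Proof.
move=> Hx col_mu; have := f_balanced i (fun l => (l == mu)%:R) a Hx.
by rewrite Lel_indicator mulS_xi_compr mulS_xi_compl col_mu !upd_id.
Qed.

Variable N : nat.
Hypothesis chain_bound : forall s : seq (Comp n r), dec_chain s -> (size s <= N)%N.
Hypothesis N_lt_k : (N < k)%N.

(* d is how many more terms the chain (rcons s mu) can still take. *)
Lemma f_chain d : forall (i : 'I_k) (s : seq (Comp n r)) mu x a,
  (i + d = N)%N -> size s = i -> dec_chain (rcons s mu) -> admissible x ->
  restrict (x (lift ord0 i)) (fun _ b => b == mu) = x (lift ord0 i) -> f x a = 0.
Proof.
elim: d => [|d IH] i s mu x a i_d size_s chain Hx col_mu.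
  by have := chain_bound chain; rewrite size_rcons size_s; lia.
have lt_i1 : (i.+1 < k)%N by lia.
pose i1 : 'I_k := Ordinal lt_i1.
have i1_ne0 : lift ord0 i1 != ord0 by rewrite eq_sym neq_lift.
have i_ne_i1 : lift ord0 i != lift ord0 i1 by apply/eqP => /lift_inj/(congr1 val) /=; lia.
rewrite (f_col_decomp a Hx i1_ne0); apply: big1 => nu _.
set y := x (lift ord0 i1).
have yJ : inJ y by rewrite -(slot_inJ _ i1_ne0); exact: Hx.
have Hx_nu := admissible_restrict (fun _ b => b == nu) Hx i1_ne0.
have w_i1 : widen_ord (leqnSn k) i1 = lift ord0 i by apply: val_inj.
rewrite (f_move_idempotent (i := i1) a (mu := mu) Hx_nu); last first.
  by rewrite w_i1 ffunE (negbTE i_ne_i1).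
rewrite upd_upd ffunE eqxx restrict_restrict.
have -> : restrict y (fun a b => (b == nu) && (a == mu)) =
          restrict y (fun a b => (a == mu) && (b == nu)) by apply: eq_restrict => ? ?; exact: andbC.
case: (boolP (dom mu nu)) => [mu_nu | not_dom]; last by rewrite restrict_block_eq0 ?f_upd0.
apply: (IH i1 (rcons s mu) nu) => //=.
- by lia.
- by rewrite size_rcons size_s.
- exact: sorted_rcons2.
- exact: admissible_restrict.
- by rewrite ffunE eqxx restrict_sub // => ? ? /andP[].
Qed.

End BalancedMap.

Unset Implicit Arguments.

Theorem corollary4p5 (R : comPzRingType) (n r : nat) (hn : (0 < n)%N) (hr : (0 < r)%N)
  (N : nat)
  (hNex : exists s : seq (Comp n r), dec_chain s /\ size s = N)
  (hNmax : forall s : seq (Comp n r), dec_chain s -> (size s <= N)%N) :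
  forall (lam : Comp n r) (k : nat), (N < k)%N -> Bplus_zero R k lam.
Proof.
move=> lam k N_lt_k A f f_additive _ f_balanced _ x a Hx.
pose i0 : 'I_k := Ordinal (leq_ltn_trans (leq0n N) N_lt_k).
have i0_ne0 : lift ord0 i0 != ord0 by rewrite eq_sym neq_lift.
rewrite (f_col_decomp f_additive a Hx i0_ne0); apply: big1 => mu _.
apply: (f_chain f_additive f_balanced hNmax N_lt_k (d := N) (i := i0) (s := [::])
          (mu := mu)) => //.
- exact: admissible_restrict.
- by rewrite ffunE eqxx restrict_sub.
Qed.
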